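(* Let $\mathcal{C}$ be an exact-repair regenerating code with parameters $\{(n,k,d)=(4,3,3),(\alpha,\beta),B\}$. If $\frac{3}{2}\beta<\alpha<3\beta$, then $$3B\le 4\alpha+6\beta .$$
   Context: An exact-repair regenerating code with parameters $\{(n,k,d),(\alpha,\beta),B\}$: a file $M$ uniformly distributed over $\mathbb{F}_q^B$ (entropies measured in units of $\log q$); node $i\in[n]$ stores $W_i$, a deterministic function of $M$, with $H(W_i)\le\alpha$; (data collection) for every $K\subseteq[n]$ with $|K|=k$, $M$ is a function of $(W_a)_{a\in K}$; (exact repair) for every node $y$ and every set $D\subseteq[n]\setminus\{y\}$ with $|D|=d$, each $x\in D$ sends helper data, a deterministic function of $W_x$ of entropy at most $\beta$, from which $W_y$ is exactly recoverable. *)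

From mathcomp Require Import all_boot all_algebra.
From Stdlib Require Import Reals.
Set Implicit Arguments. Unset Strict Implicit. Unset Printing Implicit Defensive.

Local Open Scope R_scope.

(* Shannon entropy, in units of log q (q = #|F|), of the random variable f M,
   where M is uniformly distributed over the finite type T. *)
Definition entropy_q (q : nat) (T U : finType) (f : T -> U) : R :=
  \big[Rplus/R0]_(u : U)
     (let c := #|[set t : T | f t == u]|%N in
      if eqn c O then R0
      else - (INR c / INR #|T|) * ln (INR c / INR #|T|) / ln (INR q)).

Definition is_ER_regen_code (F : finFieldType) (n k d B : nat) (alpha beta : R)
    (Sym Hlp : finType) (W : 'I_n -> {ffun 'I_B -> F} -> Sym) : Prop :=
  (forall i : 'I_n, entropy_q #|F| (W i) <= alpha) /\
  (forall K : {set 'I_n}, #|K| = k ->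
     forall m m' : {ffun 'I_B -> F},
       (forall a, a \in K -> W a m = W a m') -> m = m') /\
  (forall (y : 'I_n) (D : {set 'I_n}), y \notin D -> #|D| = d ->
     exists h : 'I_n -> Sym -> Hlp,
       (forall x, x \in D -> entropy_q #|F| (fun m => h x (W x m)) <= beta) /\
       (forall m m' : {ffun 'I_B -> F},
          (forall x, x \in D -> h x (W x m) = h x (W x m')) ->
          W y m = W y m')).

(* Tian's outer bound for exact-repair regenerating codes with (n,k,d) = (4,3,3):
   3 B <= 4 alpha + 6 beta.

   Every variable of the code is a function of the uniform file M, so its entropy
   is computed from the sizes of the fibers of that function.  From this formula we
   derive the Shannon inequalities (monotonicity and submodularity) for the joint
   entropy of any subfamily of a family of variables.  A (4,3,3) code has twenty
   such variables: the node contents W_x and the helper messages S_(x,y) sent by x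
   to repair y.  Subfamilies are encoded as boolean patterns, and three structural
   rules (W_x determines S_(x,y); the S_(x,y), x <> y, determine W_y; three node
   contents determine M) give a computable closure that preserves entropy.
   Averaging the joint entropy over the 24 relabellings of the nodes yields a
   symmetric set function, for which an instance of submodularity up to closure and
   relabelling can be checked by computation.  Sixteen such instances, found by
   linear programming, combine with the storage and bandwidth bounds to give the
   theorem. *)

From mathcomp Require Import all_boot all_algebra.
From Stdlib Require Import Reals Lra Lia.
From HB Require Import structures.
From mathcomp Require Import zify.
Set Implicit Arguments. Unset Strict Implicit. Unset Printing Implicit Defensive.
Local Open Scope R_scope.

Lemma RplusA : associative Rplus. Proof. by move=> *; ring. Qed.
Lemma RmultA : associative Rmult. Proof. by move=> *; ring. Qed.
HB.instance Definition _ :=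
  Monoid.isComLaw.Build R R0 Rplus RplusA Rplus_comm Rplus_0_l.
HB.instance Definition _ :=
  Monoid.isComLaw.Build R R1 Rmult RmultA Rmult_comm Rmult_1_l.
HB.instance Definition _ := Monoid.isMulLaw.Build R R0 Rmult Rmult_0_l Rmult_0_r.
HB.instance Definition _ :=
  Monoid.isAddLaw.Build R Rmult Rplus Rmult_plus_distr_r Rmult_plus_distr_l.

Lemma rsum_le (I : Type) (s : seq I) (P : pred I) (F G : I -> R) :
  (forall i, P i -> F i <= G i) ->
  \big[Rplus/R0]_(i <- s | P i) F i <= \big[Rplus/R0]_(i <- s | P i) G i.
Proof. by move=> FG; apply: (big_ind2 (fun x y => x <= y)) => // *; lra. Qed.

Lemma rsum_INR (I : Type) (s : seq I) (P : pred I) (F : I -> nat) :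
  \big[Rplus/R0]_(i <- s | P i) INR (F i) = INR (\sum_(i <- s | P i) F i).
Proof. by rewrite (big_morph INR plus_INR (erefl (INR 0))). Qed.

Lemma rsum_const (T : finType) (c : R) : \big[Rplus/R0]_(i : T) c = INR #|T| * c.
Proof.
rewrite -sum1_card -rsum_INR big_distrl /=.
by apply: eq_bigr => _ _; rewrite Rmult_1_l.
Qed.

Lemma rsum_seq_const (I : Type) (r : seq I) (c : R) :
  \big[Rplus/R0]_(i <- r) c = INR (size r) * c.
Proof.
elim: r => [|i r IH]; first by rewrite big_nil /=; ring.
by rewrite big_cons IH; change (size (i :: r)) with (size r).+1; rewrite S_INR; ring.
Qed.

Section FiberEntropy.
Variables (q : nat) (T : finType).
Hypotheses (q_gt1 : (1 < q)%nat) (T_gt0 : (0 < #|T|)%nat).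

Definition fiber (U : finType) (f : T -> U) (t : T) : nat := #|[set s | f s == f t]|.
Definition logfiber (U : finType) (f : T -> U) : R :=
  \big[Rplus/R0]_t ln (INR (fiber f t)).
Definition determines (U V : finType) (f : T -> U) (g : T -> V) : Prop :=
  forall s t, f s = f t -> g s = g t.

Lemma fiber_gt0 (U : finType) (f : T -> U) t : 0 < INR (fiber f t).
Proof. by apply: lt_0_INR; apply/ltP/card_gt0P; exists t; rewrite inE. Qed.

Lemma fiber_eq (U : finType) (f : T -> U) s t : f s = f t -> fiber f s = fiber f t.
Proof. by move=> fst; apply: eq_card => r; rewrite !inE fst. Qed.

Lemma fiber_sumE (U : finType) (f : T -> U) t :
  INR (fiber f t) = \big[Rplus/R0]_s (if f s == f t then 1 else 0).
Proof.
rewrite -[X in _ = X](big_mkcond _ (fun _ => 1)) /= -[1]/(INR 1) rsum_INR.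
by rewrite sum1_card /fiber; congr (INR _); apply: eq_card => s; rewrite inE.
Qed.

Local Notation N := (INR #|T|).
Lemma N_gt0 : 0 < N. Proof. by apply: lt_0_INR; apply/ltP. Qed.
Lemma lnq_gt0 : 0 < ln (INR q).
Proof. by rewrite -ln_1; apply: ln_increasing; [lra | apply: lt_1_INR; apply/ltP]. Qed.

Lemma entropy_fiberE (U : finType) (f : T -> U) :
  entropy_q q f = (N * ln N - logfiber f) / (N * ln (INR q)).
Proof.
have N0 := N_gt0; have lq := lnq_gt0.
pose c u := #|[set t : T | f t == u]|.
have byfiber (G : U -> R) :
    \big[Rplus/R0]_t G (f t) = \big[Rplus/R0]_u (INR (c u) * G u).
  rewrite (partition_big f xpredT) //=; apply: eq_bigr => u _.
  rewrite (eq_bigr (fun _ => INR 1 * G u)); last by move=> t /eqP ->; rewrite /= Rmult_1_l.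
  rewrite -big_distrl rsum_INR sum1_card; congr (INR _ * _).
  by apply: eq_card => t; rewrite inE.
have sum_c : \big[Rplus/R0]_u INR (c u) = N.
  have := byfiber (fun _ => 1); rewrite rsum_const Rmult_1_r => ->.
  by apply: eq_bigr => u _; ring.
have -> : logfiber f = \big[Rplus/R0]_u (INR (c u) * ln (INR (c u))).
  by rewrite /logfiber -byfiber.
rewrite /entropy_q /Rdiv (eq_bigr (fun u => (INR (c u) * ln N -
    INR (c u) * ln (INR (c u))) * / (N * ln (INR q)))); last first.
  move=> u _; rewrite -/(c u); case: eqnP => [-> | /eqP cu0] /=; first ring.
  have cu : 0 < INR (c u) by apply: lt_0_INR; apply/ltP; rewrite lt0n.
  rewrite ln_mult ?ln_Rinv //; last exact: Rinv_0_lt_compat.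
  by field; split; apply: Rgt_not_eq.
rewrite -big_distrl /=; congr (_ * _).
rewrite (eq_bigr (fun u => INR (c u) * ln N + - (INR (c u) * ln (INR (c u)))));
  last by move=> *; rewrite /Rminus.
rewrite big_split /= -big_distrl /= sum_c.
by rewrite -(big_morph Ropp Ropp_plus_distr Ropp_0).
Qed.

Lemma fiber_le (U V : finType) (f : T -> U) (g : T -> V) t :
  determines f g -> (fiber f t <= fiber g t)%nat.
Proof.
move=> fg; apply: subset_leq_card; apply/subsetP => s.
by rewrite !inE => /eqP /fg ->.
Qed.

Lemma entropy_le (U V : finType) (f : T -> U) (g : T -> V) :
  determines f g -> entropy_q q g <= entropy_q q f.
Proof.
move=> fg; rewrite !entropy_fiberE /Rdiv; apply: Rmult_le_compat_r.
  by apply/Rlt_le/Rinv_0_lt_compat/Rmult_lt_0_compat; [exact: N_gt0 | exact: lnq_gt0].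
suff : logfiber f <= logfiber g by lra.
apply: rsum_le => t _.
have [lt_fg | ->] := Rle_lt_or_eq_dec _ _ (le_INR _ _ (leP (fiber_le t fg))).
  by left; apply: ln_increasing => //; exact: fiber_gt0.
by right.
Qed.

(* Submodularity is proved on the fiber sums: with x_t = |f-fiber| |g-fiber| /
   (|(f,g)-fiber| |h-fiber|), we have sum_t x_t <= N, and ln x <= x - 1. *)
Section Submodularity.
Variables (U V X : finType) (f : T -> U) (g : T -> V) (h : T -> X).
Hypotheses (fh : determines f h) (gh : determines g h).
Let fg t := (f t, g t).
Let ind (b : bool) : R := if b then 1 else 0.
Let den t := INR (fiber fg t) * INR (fiber h t).

Lemma den_gt0 t : 0 < den t.
Proof. by apply: Rmult_lt_0_compat; apply: fiber_gt0. Qed.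

(* For fixed s and r, the t with f t = f s and g t = g r form (at most) one
   fiber of (f, g), on which h is constant, equal to h s = h r. *)
Lemma fiber_pair_sum s r :
  \big[Rplus/R0]_t (ind ((f t == f s) && (g t == g r)) / den t)
    <= ind (h s == h r) / INR (fiber h s).
Proof.
have hs0 := fiber_gt0 h s.
case: (pickP (fun t => (f t == f s) && (g t == g r))) => [t0 /andP[/eqP f0 /eqP g0] | none];
  last first.
  rewrite big1 => [|t _]; last by rewrite (none t) /ind /Rdiv Rmult_0_l.
  by apply: Rmult_le_pos; [rewrite /ind; case: ifP => _; lra | apply/Rlt_le/Rinv_0_lt_compat].
have -> : h s = h r by rewrite -(fh f0) (gh g0).
rewrite eqxx /ind (eq_bigr (fun t => (if fg t == fg t0 then 1 else 0) *
    / (INR (fiber fg t0) * INR (fiber h s)))); last first.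
  move=> t _; rewrite /fg -f0 -g0 xpair_eqE.
  case: (f t =P f t0) => [ft | _]; case: (g t =P g t0) => [gt | _] /=;
    rewrite /Rdiv ?Rmult_0_l ?Rmult_1_l //.
  rewrite /den (@fiber_eq _ fg t t0); last by rewrite /fg ft gt.
  by rewrite (fiber_eq (fh ft)) (fiber_eq (fh f0)).
rewrite -big_distrl -fiber_sumE /=; right; field.
by split; apply: Rgt_not_eq => //; apply: fiber_gt0.
Qed.

Lemma fiber_ratio_sum :
  \big[Rplus/R0]_t (INR (fiber f t) * INR (fiber g t) / den t) <= N.
Proof.
rewrite (eq_bigr (fun t => \big[Rplus/R0]_s \big[Rplus/R0]_r
    (ind ((f t == f s) && (g t == g r)) / den t))); last first.
  move=> t _; rewrite !fiber_sumE /Rdiv big_distrl big_distrl /=.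
  apply: eq_bigr => s _; rewrite big_distrr big_distrl /=; apply: eq_bigr => r _.
  rewrite /ind [f s == _]eq_sym [g r == _]eq_sym.
  by case: (f t == f s); case: (g t == g r) => /=; ring.
rewrite exchange_big /=; under eq_bigr => s _ do rewrite exchange_big /=.
apply: (Rle_trans _ (\big[Rplus/R0]_(s : T) 1)); last by rewrite rsum_const Rmult_1_r; right.
apply: rsum_le => s _; apply: Rle_trans; first by apply: rsum_le => r _; apply: fiber_pair_sum.
rewrite /Rdiv -big_distrl (eq_bigr (fun r => if h r == h s then 1 else 0)) => [|r _];
  last by rewrite /ind eq_sym.
by rewrite -fiber_sumE; apply: Req_le; apply: Rinv_r; apply: Rgt_not_eq; apply: fiber_gt0.
Qed.

(* With ln x <= x - 1 applied to each x_t. *)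
Lemma logfiber_supermod : logfiber f + logfiber g <= logfiber fg + logfiber h.
Proof.
have pointwise t : ln (INR (fiber f t)) + ln (INR (fiber g t)) + 1
    <= ln (INR (fiber fg t)) + ln (INR (fiber h t))
       + INR (fiber f t) * INR (fiber g t) / den t.
  have cf := fiber_gt0 f t; have cg := fiber_gt0 g t.
  have cfg := fiber_gt0 fg t; have ch := fiber_gt0 h t.
  have x0 : 0 < INR (fiber f t) * INR (fiber g t) / den t.
    by apply: Rdiv_lt_0_compat; [apply: Rmult_lt_0_compat | apply: den_gt0].
  have := exp_ineq1_le (ln (INR (fiber f t) * INR (fiber g t) / den t)).
  rewrite exp_ln // /Rdiv /den ln_mult; last 2 first.
  - exact: Rmult_lt_0_compat.
  - by apply: Rinv_0_lt_compat; apply: Rmult_lt_0_compat.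
  rewrite ln_Rinv; last exact: Rmult_lt_0_compat.
  rewrite !ln_mult //; lra.
have := @rsum_le _ (index_enum T) xpredT _ _ (fun t _ => pointwise t).
rewrite !big_split /= rsum_const => sum_le.
have := fiber_ratio_sum; rewrite /logfiber; lra.
Qed.

Lemma entropy_submod : entropy_q q fg + entropy_q q h <= entropy_q q f + entropy_q q g.
Proof.
have := logfiber_supermod; rewrite !entropy_fiberE /Rdiv -!Rmult_plus_distr_r => L.
apply: Rmult_le_compat_r; last lra.
by apply/Rlt_le/Rinv_0_lt_compat/Rmult_lt_0_compat; [exact: N_gt0 | exact: lnq_gt0].
Qed.
End Submodularity.

Lemma entropy_const (U : finType) (f : T -> U) :
  (forall s t, f s = f t) -> entropy_q q f = 0.
Proof.
move=> fconst; rewrite entropy_fiberE /logfiber (eq_bigr (fun _ => ln N)) => [|t _].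
  by rewrite rsum_const /Rdiv Rminus_diag Rmult_0_l.
by congr (ln (INR _)); rewrite -cardsT; apply: eq_card => s; rewrite !inE (fconst s t) eqxx.
Qed.

Lemma entropy_injective (U : finType) (f : T -> U) :
  injective f -> entropy_q q f = ln N / ln (INR q).
Proof.
move=> finj; rewrite entropy_fiberE /logfiber (eq_bigr (fun _ => 0)) => [|t _].
  rewrite rsum_const Rmult_0_r Rminus_0_r; field.
  by split; apply: Rgt_not_eq; [exact: lnq_gt0 | exact: N_gt0].
rewrite -ln_1; congr (ln _); rewrite /fiber (_ : [set s | f s == f t] = [set t]) ?cards1 //.
by apply/setP => s; rewrite !inE; apply/eqP/eqP => [/finj | ->].
Qed.

Lemma entropy_eq (U V : finType) (f : T -> U) (g : T -> V) :
  determines f g -> determines g f -> entropy_q q f = entropy_q q g.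
Proof. by move=> fg gf; apply: Rle_antisym; apply: entropy_le. Qed.
End FiberEntropy.

Section Subfamily.
Variables (q : nat) (T I Val : finType) (V : I -> T -> Val).
Hypotheses (q_gt1 : (1 < q)%nat) (T_gt0 : (0 < #|T|)%nat).

Definition joint (P : pred I) (t : T) : {ffun I -> option Val} :=
  [ffun i => if P i then Some (V i t) else None].
Local Notation H P := (entropy_q q (joint P)).

Lemma joint_coord (P : pred I) i : P i -> determines (joint P) (V i).
Proof. by move=> Pi s t /ffunP /(_ i); rewrite !ffunE Pi => -[]. Qed.

Lemma joint_determines (U : finType) (f : T -> U) (P : pred I) :
  (forall i, P i -> determines f (V i)) -> determines f (joint P).
Proof.
by move=> det s t fst; apply/ffunP => i; rewrite !ffunE; case: ifP => // /det/(_ s t fst) ->.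
Qed.

Lemma subfamily_le (P Q : pred I) :
  (forall i, Q i -> determines (joint P) (V i)) -> H Q <= H P.
Proof. by move=> det; apply: entropy_le => //; apply: joint_determines. Qed.

Lemma subfamily_submod (P Q : pred I) :
  H (predU P Q) + H (predI P Q) <= H P + H Q.
Proof.
have sub (R S : pred I) : (forall i, R i -> S i) -> determines (joint S) (joint R).
  by move=> RS; apply: joint_determines => i /RS; apply: joint_coord.
have -> : H (predU P Q) = entropy_q q (fun t => (joint P t, joint Q t)).
  apply: entropy_eq => //.
  - move=> s t st.
    have subU (R : pred I) : (forall i, R i -> P i || Q i) -> joint R s = joint R t.
      by move=> RU; apply: (sub _ (predU P Q)) st.
    by rewrite (subU P) ?(subU Q) // => i Ri; rewrite Ri ?orbT.
  - apply: joint_determines => i /orP[Pi | Qi] s t [].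
      by move/(joint_coord Pi).
    by move=> _ /(joint_coord Qi).
by apply: entropy_submod => //; apply: sub => i /andP[].
Qed.

Lemma joint_ext (P Q : pred I) : P =1 Q -> H P = H Q.
Proof.
by move=> PQ; apply: entropy_eq => // s t /ffunP st; apply/ffunP => i;
  move: (st i); rewrite !ffunE PQ.
Qed.
End Subfamily.

(* The variables of a (4,3,3) code sit at 20 positions: Wn x holds
   the content W_x of node x, and Sh x y the helper message S_(x,y) sent by node x
   for the repair of node y.  A set
   of variables is a pattern, i.e. its characteristic list of booleans; all the
   functions below are meant to be evaluated by [vm_compute]. *)
Section Patterns.
Local Open Scope nat_scope.

Definition Wn (x : nat) : nat := x.
Definition Sh (x y : nat) : nat := 4 + 4 * x + y.

Definition pattern := seq bool.
Definition bit (p : pattern) (n : nat) : bool := nth false p n.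
Definition pat (l : seq nat) : pattern := mkseq (fun n => n \in l) 20.
Definition por (p r : pattern) : pattern := mkseq (fun n => bit p n || bit r n) 20.
Definition pand (p r : pattern) : pattern := mkseq (fun n => bit p n && bit r n) 20.
Definition psub (p r : pattern) : bool := all (fun n => bit p n ==> bit r n) (iota 0 20).

(* The structural rules: all nodes but possibly d are present (data collection);
   W_n is recovered from the messages S_(x,n) (repair); S_(x,y) is computed from
   W_x.  Six steps of [cstep] reach the closure of any pattern. *)
Definition three_nodes (p : pattern) : bool :=
  has (fun d => all (fun x => (x == d) || bit p (Wn x)) (iota 0 4)) (iota 0 4).
Definition derivable (p : pattern) (n : nat) : bool :=
  if n < 4 then all (fun x => (x == n) || bit p (Sh x n)) (iota 0 4)
  else bit p (Wn ((n - 4) %/ 4)).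
Definition cstep (p : pattern) : pattern :=
  mkseq (fun n => [|| bit p n, three_nodes p | derivable p n]) 20.
Definition cclos (p : pattern) : pattern := iter 6 cstep p.

Definition img (s : seq nat) (n : nat) : nat :=
  if n < 4 then nth 0 s n else Sh (nth 0 s ((n - 4) %/ 4)) (nth 0 s ((n - 4) %% 4)).
Definition relabel (s : seq nat) (p : pattern) : pattern :=
  mkseq (fun n => bit p (img s n)) 20.
Definition perms : seq (seq nat) := permutations (iota 0 4).

Lemma perms_small : all (fun s => (size s == 4) && all (fun k => k < 4) s) perms.
Proof. by vm_compute. Qed.

Lemma perms_closed :
  all (fun s => perm_eq (map (fun t => map (nth 0 s) t) perms) perms) perms.
Proof. by vm_compute. Qed.

Lemma Sh_divmod x y : y < 4 -> (Sh x y - 4) %/ 4 = x /\ (Sh x y - 4) %% 4 = y.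
Proof.
move=> y4; rewrite /Sh -addnA addKn mulnC.
by rewrite divnMDl // modnMDl divn_small // modn_small // addn0.
Qed.

Lemma img_lt s n : all (fun k => k < 4) s -> n < 20 -> img s n < 20.
Proof.
move=> /allP s4 n20; have lt4 k : nth 0 s k < 4.
  by have [/mem_nth/s4 | /(nth_default 0) ->] := ltnP k (size s).
rewrite /img; case: ifP => _; first by apply: leq_trans (lt4 n) _.
by rewrite /Sh; move: (lt4 ((n - 4) %/ 4)) (lt4 ((n - 4) %% 4)); lia.
Qed.

Lemma img_comp s t n : size t = 4 -> all (fun k => k < 4) t -> n < 20 ->
  img s (img t n) = img (map (nth 0 s) t) n.
Proof.
move=> t_sz /allP t4 n20; have tk4 k : k < 4 -> nth 0 t k < 4.
  by move=> k4; apply/t4/mem_nth; rewrite t_sz.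
case: (ltnP n 4) => n4.
  have -> : img t n = nth 0 t n by rewrite /img n4.
  by rewrite /img tk4 // n4 (nth_map 0) ?t_sz.
have q4 : (n - 4) %/ 4 < 4 by rewrite ltn_divLR //; lia.
have r4 : (n - 4) %% 4 < 4 by rewrite ltn_mod.
have -> : img t n = Sh (nth 0 t ((n - 4) %/ 4)) (nth 0 t ((n - 4) %% 4)).
  by rewrite /img ltnNge n4.
rewrite {1}/img [Sh _ _ < 4]ltnNge leq_addr /=.
have [-> ->] := Sh_divmod (nth 0 t ((n - 4) %/ 4)) (tk4 _ r4).
by rewrite /img ltnNge n4 /= !(nth_map 0) ?t_sz.
Qed.

Lemma relabel_comp s t p : size t = 4 -> all (fun k => k < 4) t ->
  relabel t (relabel s p) = relabel (map (nth 0 s) t) p.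
Proof.
move=> t_sz t4; apply: (@eq_from_nth _ false); rewrite ?size_mkseq // => n n20.
by rewrite !nth_mkseq // /bit nth_mkseq ?img_comp ?img_lt.
Qed.

(* A short-circuiting [has], so that the searches below stay cheap under the
   call-by-value evaluation of [vm_compute]. *)
Fixpoint some (T : Type) (f : T -> bool) (s : seq T) : bool :=
  if s is x :: s' then (if f x then true else some f s') else false.

Lemma someE (T : Type) (f : T -> bool) s : some f s = has f s.
Proof. by elim: s => //= x s ->; case: (f x). Qed.

Definition aligned (a b u d : pattern) : bool :=
  all (fun s => let A := relabel s a in let B := relabel s b in
         psub (relabel s u) (cclos (por A B)) &&
         psub (relabel s d) (pand (cclos A) (cclos B))) perms.

(* [shannon_ok a b u d]: after relabelling b, u and d, the variable lists
   a, b, u, d form an instance of submodularity H(u) + H(d) <= H(a) + H(b)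
   up to closure; the witnesses are found by search. *)
Definition shannon_ok (a b u d : seq nat) : bool :=
  let a := pat a in
  some (fun sb => let b := relabel sb (pat b) in
    let cab := cclos (por a b) in let cd := pand (cclos a) (cclos b) in
    some (fun su => let u := relabel su (pat u) in
      if psub u cab then
        some (fun sd => let d := relabel sd (pat d) in
                        if psub d cd then aligned a b u d else false) perms
      else false) perms) perms.

Lemma shannon_okP a b u d : shannon_ok a b u d ->
  exists sb su sd, [/\ sb \in perms, su \in perms, sd \in perms &
    aligned (pat a) (relabel sb (pat b)) (relabel su (pat u)) (relabel sd (pat d))].
Proof.
rewrite /shannon_ok someE => /hasP[sb sbP]; rewrite someE => /hasP[su suP].
case: ifP => // _; rewrite someE => /hasP[sd sdP]; case: ifP => // _ al.
by exists sb, su, sd.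
Qed.

Lemma node_orbit :
  all (fun s => has (fun x => relabel s (pat [:: Wn 0]) == pat [:: Wn x]) (iota 0 4)) perms.
Proof. by vm_compute. Qed.

Lemma helper_orbit : all (fun s => has (fun x => has (fun y =>
  (x != y) && (relabel s (pat [:: Sh 0 1]) == pat [:: Sh x y])) (iota 0 4)) (iota 0 4)) perms.
Proof. by vm_compute. Qed.

Lemma file_orbit : all (fun s => three_nodes (relabel s (pat [:: Wn 0; Wn 1; Wn 2]))) perms.
Proof. by vm_compute. Qed.

Lemma empty_orbit : all (fun s => relabel s (pat [::]) == pat [::]) perms.
Proof. by vm_compute. Qed.
(* The linear-programming certificate: an entry (m, a, b, u, d) stands for m
   times the submodularity instance H(u) + H(d) <= H(a) + H(b). *)
Definition certificate : seq (nat * seq nat * seq nat * seq nat * seq nat) := [::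
  (2, [:: Wn 0], [:: Sh 0 1],
     [:: Wn 0; Sh 1 2], [::]);
  (1, [:: Sh 0 1], [:: Sh 0 1],
     [:: Sh 0 1; Sh 2 1], [::]);
  (1, [:: Wn 0], [:: Sh 0 1; Sh 1 0],
     [:: Wn 0; Sh 1 0], [:: Sh 0 1]);
  (1, [:: Wn 0; Sh 1 2; Sh 3 2], [:: Sh 0 1; Sh 0 2; Sh 1 2],
     [:: Wn 0; Wn 1; Wn 2], [:: Sh 0 1; Sh 2 1]);
  (1, [:: Wn 0; Sh 1 2], [:: Wn 0; Sh 1 0; Sh 1 2; Sh 2 0],
     [:: Wn 0; Wn 1; Sh 2 0], [:: Sh 0 1; Sh 0 2; Sh 1 2]);
  (1, [:: Wn 0; Sh 1 0; Sh 1 2], [:: Sh 0 1; Sh 0 2; Sh 1 2; Sh 2 1],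
     [:: Wn 0; Sh 1 0; Sh 1 2; Sh 2 0], [:: Sh 0 1; Sh 0 2; Sh 1 2]);
  (1, [:: Wn 0; Sh 1 0; Sh 1 2; Sh 2 1], [:: Sh 0 1; Sh 2 1; Sh 3 1],
     [:: Wn 0; Sh 1 2; Sh 3 2], [:: Sh 0 1; Sh 0 2; Sh 1 0; Sh 2 0]);
  (1, [:: Sh 0 1; Sh 0 2; Sh 1 2; Sh 3 2], [:: Sh 0 1; Sh 0 2; Sh 1 2; Sh 3 2],
     [:: Wn 0; Sh 1 0; Sh 1 2; Sh 3 0; Sh 3 2], [:: Sh 0 1; Sh 0 2; Sh 1 2; Sh 2 1]);
  (2, [:: Sh 0 1], [:: Sh 0 1; Sh 2 1],
     [:: Sh 0 1; Sh 2 1; Sh 3 1], [::]);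
  (1, [:: Wn 0], [:: Sh 0 1; Sh 0 2; Sh 1 0],
     [:: Wn 0; Sh 1 0; Sh 1 2], [:: Sh 0 1]);
  (1, [:: Sh 0 1; Sh 0 2; Sh 3 1], [:: Sh 0 1],
     [:: Sh 0 1; Sh 0 2; Sh 1 2; Sh 3 2], [::]);
  (1, [:: Sh 0 1; Sh 0 2; Sh 1 2], [:: Sh 0 1],
     [:: Sh 0 1; Sh 0 2; Sh 1 2; Sh 3 2], [::]);
  (1, [:: Sh 0 1; Sh 1 0; Sh 2 0], [:: Sh 0 1; Sh 0 2; Sh 1 0; Sh 2 0],
     [:: Sh 0 1; Sh 0 2; Sh 1 0; Sh 1 2; Sh 2 0], [:: Sh 0 1; Sh 1 0]);
  (1, [:: Wn 0; Sh 1 0], [:: Sh 0 1; Sh 0 2; Sh 1 0; Sh 1 2; Sh 2 0],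
     [:: Wn 0; Sh 1 0; Sh 1 2; Sh 2 1], [:: Sh 0 1; Sh 0 2; Sh 1 0]);
  (1, [:: Wn 0; Sh 1 2], [:: Wn 0; Sh 1 0; Sh 1 2; Sh 3 0; Sh 3 2],
     [:: Wn 0; Wn 1; Wn 2], [:: Sh 0 1; Sh 0 2; Sh 3 1]);
  (1, [:: Wn 0; Wn 1; Sh 2 0], [:: Sh 0 1; Sh 2 1; Sh 3 1],
     [:: Wn 0; Wn 1; Wn 2], [:: Sh 0 1; Sh 1 0; Sh 2 0])
].

Lemma certificate_ok :
  all (fun c => let: (_, a, b, u, d) := c in shannon_ok a b u d) certificate.
Proof. by vm_compute. Qed.

End Patterns.


Lemma shannon_certificate (G : seq nat -> R) :
  (forall a b u d, shannon_ok a b u d -> G u + G d <= G a + G b) -> G [::] = 0 ->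
  3 * G [:: Wn 0; Wn 1; Wn 2] <= 4 * G [:: Wn 0] + 6 * G [:: Sh 0 1].
Proof.
move=> shannon G0.
have : 0 <= \big[Rplus/R0]_(c <- certificate)
              (let: (m, a, b, u, d) := c in INR m * (G a + G b - G u - G d)).
  rewrite big_seq; apply: (big_ind (fun x => 0 <= x)) => [|x y|]; try lra.
  case=> [[[[m a] b] u] d] /(allP certificate_ok) /shannon le_ab.
  by apply: Rmult_le_pos; [apply: pos_INR | lra].
rewrite /certificate !big_cons big_nil /=; lra.
Qed.

Section RegeneratingCode.
Variables (F : finFieldType) (B : nat) (Sym Hlp : finType).
Variable W : 'I_4 -> {ffun 'I_B -> F} -> Sym.
(* hf y x : the function computing, from W x, the message of node x for the repair of y *)
Variable hf : 'I_4 -> 'I_4 -> Sym -> Hlp.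
Local Notation T := {ffun 'I_B -> F}.
Hypothesis collect : forall K : {set 'I_4}, #|K| = 3%nat ->
  forall m m' : T, (forall a, a \in K -> W a m = W a m') -> m = m'.
Hypothesis repair : forall (y : 'I_4) (m m' : T),
  (forall x, x != y -> hf y x (W x m) = hf y x (W x m')) -> W y m = W y m'.

Lemma field_card_gt1 : (1 < #|F|)%nat.
Proof.
apply/card_gt1P; exists (@GRing.zero F), (@GRing.one F); split => //.
by rewrite eq_sym GRing.oner_neq0.
Qed.

Lemma file_card_gt0 : (0 < #|T|)%nat.
Proof. by apply/card_gt0P; exists [ffun => @GRing.zero F]. Qed.

Local Notation q1 := field_card_gt1.
Local Notation T0 := file_card_gt0.

Definition Vpos (n : 'I_20) (m : T) : Sym + Hlp :=
  let x : 'I_4 := inord ((n - 4) %/ 4) in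
  if (n < 4)%nat then inl (W (inord n) m) else inr (hf (inord ((n - 4) %% 4)) x (W x m)).
Definition sel (p : pattern) : pred 'I_20 := fun i => bit p i.
Definition hpat (p : pattern) : R := entropy_q #|F| (joint Vpos (sel p)).
Local Notation determined_by p := (determines (joint Vpos (sel p))).

Lemma sel_W p (x : 'I_4) : bit p (Wn x) -> determined_by p (W x).
Proof.
have x20 : (x < 20)%nat by apply: leq_trans (ltn_ord x) _.
move=> px s t /(joint_coord (i := inord x)); rewrite /sel inordK // => /(_ px).
by rewrite /Vpos inordK // ltn_ord inord_val => -[].
Qed.

Lemma sel_S p (x y : 'I_4) : bit p (Sh x y) -> determined_by p (fun m => hf y x (W x m)).
Proof.
have xy20 : (Sh x y < 20)%nat by rewrite /Sh; move: (ltn_ord x) (ltn_ord y); lia.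
move=> pxy s t /(joint_coord (i := inord (Sh x y))); rewrite /sel inordK // => /(_ pxy).
have [dx my] := Sh_divmod x (ltn_ord y).
by rewrite /Vpos inordK // ltnNge leq_addr /= dx my !inord_val => -[].
Qed.

Lemma three_nodes_file p : three_nodes p -> determined_by p (fun m : T => m).
Proof.
case/hasP => d _ /allP others s t st; apply: (collect (K := [set~ inord d])).
  by rewrite cardsC1 card_ord.
move=> a; rewrite in_setC1 => ad; apply: (sel_W _ st).
have : nat_of_ord a \in iota 0 4 by rewrite mem_iota ltn_ord.
move/others => /orP[/eqP ad' | //].
by move: ad; rewrite -ad' inord_val eqxx.
Qed.

Lemma cstep_sound p (i : 'I_20) : bit (cstep p) i -> determined_by p (Vpos i).
Proof.
rewrite /bit nth_mkseq //= -/(bit p i) => /or3P[pi | /three_nodes_file pM | der].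
- exact: joint_coord.
- by move=> s t /pM ->.
move: der; rewrite /derivable /Vpos; case: ifP => i4 der s t st.
  have y_val : (inord i : 'I_4) = i :> nat by rewrite inordK.
  congr inl; apply: repair => x xy; apply: (sel_S _ st); rewrite y_val.
  have : nat_of_ord x \in iota 0 4 by rewrite mem_iota ltn_ord.
  move/(allP der) => /orP[/eqP xi | //].
  by move: xy; rewrite -(inj_eq val_inj) /= y_val xi eqxx.
have q4 : ((i - 4) %/ 4 < 4)%nat by rewrite ltn_divLR //; move: (ltn_ord i); lia.
set x : 'I_4 := inord ((i - 4) %/ 4).
by rewrite (sel_W (x := x) _ st) // inordK.
Qed.

Lemma psubP p r : reflect (forall i : 'I_20, bit p i -> bit r i) (psub p r).
Proof.
apply: (iffP allP) => [sub i | sub n]; first by apply/implyP/sub; rewrite mem_iota ltn_ord.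
by rewrite mem_iota => /= n20; apply/implyP; apply: (sub (Ordinal n20)).
Qed.

Lemma cclos_ext p (i : 'I_20) : bit p i -> bit (cclos p) i.
Proof.
suff iter_ext n : bit p i -> bit (iter n cstep p) i by apply: iter_ext.
elim: n => //= n IH /IH pi.
by rewrite /bit nth_mkseq //= -/(bit _ i) pi.
Qed.

Lemma hpat_le p r : psub p r -> hpat p <= hpat r.
Proof. by move/psubP => pr; apply: (subfamily_le q1 T0) => i /pr; apply: joint_coord. Qed.

Lemma hpat_cstep p : hpat (cstep p) = hpat p.
Proof.
apply: Rle_antisym; first by apply: (subfamily_le q1 T0) => i /cstep_sound.
by apply: hpat_le; apply/psubP => i pi; rewrite /bit nth_mkseq //= -/(bit p i) pi.
Qed.

Lemma hpat_cclos p : hpat (cclos p) = hpat p.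
Proof.
suff iterE n : hpat (iter n cstep p) = hpat p by apply: iterE.
by elim: n => //= n <-; rewrite hpat_cstep.
Qed.

Lemma hpat_submod p r : hpat (por p r) + hpat (pand p r) <= hpat p + hpat r.
Proof.
rewrite /hpat (joint_ext _ q1 T0 (P := sel (por p r)) (Q := predU (sel p) (sel r))).
  rewrite (joint_ext _ q1 T0 (P := sel (pand p r)) (Q := predI (sel p) (sel r))).
    exact: (subfamily_submod _ q1 T0).
  by move=> i; rewrite /sel /bit nth_mkseq.
by move=> i; rewrite /sel /bit nth_mkseq.
Qed.

Lemma hpat_aligned a b u d : psub u (cclos (por a b)) ->
  psub d (pand (cclos a) (cclos b)) -> hpat u + hpat d <= hpat a + hpat b.
Proof.
move=> /hpat_le u_ab /hpat_le d_ab.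
have ab_cl : hpat (por a b) <= hpat (por (cclos a) (cclos b)).
  apply: hpat_le; apply/psubP => i; rewrite /bit !nth_mkseq // -!/(bit _ i).
  by case/orP => /cclos_ext ->; rewrite ?orbT.
have := hpat_submod (cclos a) (cclos b); rewrite !hpat_cclos in u_ab ab_cl *; lra.
Qed.

Definition hsym (p : pattern) : R :=
  (\big[Rplus/R0]_(s <- perms) hpat (relabel s p)) / INR (size perms).

Lemma perms_size_gt0 : 0 < INR (size perms).
Proof. by apply: lt_0_INR; apply/ltP; vm_compute. Qed.

Lemma hsym_relabel s p : s \in perms -> hsym (relabel s p) = hsym p.
Proof.
move=> sP; rewrite /hsym; congr (_ / _).
rewrite (eq_big_seq (fun t => hpat (relabel (map (nth 0%nat s) t) p))) => [|t tP]; last first.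
  by have /andP[/eqP t_sz t4] := allP perms_small t tP; rewrite relabel_comp.
rewrite -(big_map (fun t => map (nth 0%nat s) t) xpredT (fun t => hpat (relabel t p))).
exact/perm_big/(allP perms_closed).
Qed.

Lemma hsym_shannon a b u d : shannon_ok a b u d ->
  hsym (pat u) + hsym (pat d) <= hsym (pat a) + hsym (pat b).
Proof.
case/shannon_okP => sb [su [sd [sbP suP sdP al]]].
rewrite -(hsym_relabel (pat b) sbP) -(hsym_relabel (pat u) suP) -(hsym_relabel (pat d) sdP).
rewrite /hsym /Rdiv -!Rmult_plus_distr_r; apply: Rmult_le_compat_r.
  exact/Rlt_le/Rinv_0_lt_compat/perms_size_gt0.
rewrite -!big_split /= !big_seq; apply: rsum_le => s sP.
by have /andP[] := allP al s sP; apply: hpat_aligned.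
Qed.

Lemma hsym_le p c : (forall s, s \in perms -> hpat (relabel s p) <= c) -> hsym p <= c.
Proof.
move=> le_c; have n0 := perms_size_gt0; rewrite /hsym.
apply/(Rmult_le_reg_r (INR (size perms))) => //; rewrite /Rdiv Rmult_assoc Rinv_l; last lra.
rewrite Rmult_1_r Rmult_comm -rsum_seq_const !big_seq; exact: rsum_le.
Qed.

Lemma hsym_const p c : (forall s, s \in perms -> hpat (relabel s p) = c) -> hsym p = c.
Proof.
move=> eq_c; rewrite /hsym (eq_big_seq (fun _ => c)) // rsum_seq_const.
have := perms_size_gt0; set n := INR _ => n0; field; lra.
Qed.

Lemma bit_pat1 n k : (k < 20)%nat -> bit (pat [:: n]) k = (k == n).
Proof. by move=> k20; rewrite /bit nth_mkseq // inE. Qed.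

Lemma hpat_W (x : 'I_4) : hpat (pat [:: Wn x]) = entropy_q #|F| (W x).
Proof.
have x20 : (x < 20)%nat by apply: leq_trans (ltn_ord x) _.
apply: (entropy_eq q1 T0); first by apply: sel_W; rewrite bit_pat1 ?eqxx.
apply: joint_determines => i; rewrite /sel bit_pat1 // => /eqP ix s t st.
by rewrite /Vpos ix ltn_ord inord_val st.
Qed.

Lemma hpat_S (x y : 'I_4) : hpat (pat [:: Sh x y]) = entropy_q #|F| (fun m => hf y x (W x m)).
Proof.
have xy20 : (Sh x y < 20)%nat by rewrite /Sh; move: (ltn_ord x) (ltn_ord y); lia.
apply: (entropy_eq q1 T0); first by apply: sel_S; rewrite bit_pat1 ?eqxx.
apply: joint_determines => i; rewrite /sel bit_pat1 // => /eqP ixy s t st.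
have [dx my] := Sh_divmod x (ltn_ord y).
by rewrite /Vpos ixy ltnNge leq_addr /= dx my !inord_val st.
Qed.

Lemma hpat_three p : three_nodes p -> hpat p = INR B.
Proof.
move=> p3; rewrite /hpat (@entropy_eq _ _ q1 T0 _ _ _ (fun m : T => m)) //; last first.
  - by apply: joint_determines => i _ s t /= ->.
  - exact: three_nodes_file.
have cardT : INR #|T| = INR #|F| ^ B.
  rewrite card_ffun card_ord; elim: B => [|n IH]; first by rewrite expn0.
  by rewrite expnS mult_INR IH.
rewrite (entropy_injective q1 T0) // cardT ln_pow; last first.
  by apply: lt_0_INR; apply/ltP; apply: ltnW q1.
field; apply: Rgt_not_eq; exact: lnq_gt0 q1.
Qed.

(* The four values of hsym entering the certificate: every relabelling of W_0 is
   a node content, of S_(0,1) a helper message, of (W_0, W_1, W_2) three nodes. *)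
Lemma hsym_node (alpha : R) : (forall x, entropy_q #|F| (W x) <= alpha) ->
  hsym (pat [:: Wn 0]) <= alpha.
Proof.
move=> storage; apply: hsym_le => s /(allP node_orbit) /hasP[x].
rewrite mem_iota => /= x4 /eqP ->.
by rewrite -[x]/(nat_of_ord (Ordinal x4)) hpat_W.
Qed.

Lemma hsym_helper (beta : R) :
  (forall y x, x != y -> entropy_q #|F| (fun m => hf y x (W x m)) <= beta) ->
  hsym (pat [:: Sh 0 1]) <= beta.
Proof.
move=> bandwidth; apply: hsym_le => s /(allP helper_orbit).
move=> /hasP[x x_in /hasP[y y_in /andP[xy /eqP ->]]].
have x4 : (x < 4)%nat by move: x_in; rewrite mem_iota => /andP[].
have y4 : (y < 4)%nat by move: y_in; rewrite mem_iota => /andP[].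
rewrite -[x]/(nat_of_ord (Ordinal x4)) -[y]/(nat_of_ord (Ordinal y4)) hpat_S.
by apply: bandwidth; rewrite -(inj_eq val_inj).
Qed.

Lemma hsym_file : hsym (pat [:: Wn 0; Wn 1; Wn 2]) = INR B.
Proof. by apply: hsym_const => s /(allP file_orbit) /hpat_three. Qed.

Lemma hsym_empty : hsym (pat [::]) = 0.
Proof.
apply: hsym_const => s /(allP empty_orbit) /eqP ->.
by apply: (entropy_const q1 T0) => m m'; apply/ffunP => i; rewrite !ffunE /sel /bit nth_mkseq.
Qed.
End RegeneratingCode.

Theorem mainTheorem5 (F : finFieldType) (B : nat) (alpha beta : R)
    (Sym Hlp : finType) (W : 'I_4 -> {ffun 'I_B -> F} -> Sym) :
  @is_ER_regen_code F 4 3 3 B alpha beta Sym Hlp W ->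
  (3 / 2 * beta < alpha)%R -> (alpha < 3 * beta)%R ->
  (3 * INR B <= 4 * alpha + 6 * beta)%R.
Proof.
move=> [storage [collect repair_from]] _ _.
have helpers y : exists h : 'I_4 -> Sym -> Hlp,
    (forall x, x \in [set~ y] -> entropy_q #|F| (fun m => h x (W x m)) <= beta) /\
    (forall m m', (forall x, x \in [set~ y] -> h x (W x m) = h x (W x m')) ->
       W y m = W y m').
  by apply: repair_from; rewrite ?cardsC1 ?card_ord // !inE eqxx.
have [hf hfP] := fin_all_exists helpers.
have repair y m m' : (forall x, x != y -> hf y x (W x m) = hf y x (W x m')) ->
    W y m = W y m'.
  by move=> same; apply: (proj2 (hfP y)) => x; rewrite in_setC1; apply: same.
have bandwidth y x : x != y -> entropy_q #|F| (fun m => hf y x (W x m)) <= beta.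
  by move=> xy; apply: (proj1 (hfP y)); rewrite in_setC1.
have := shannon_certificate (G := fun l => hsym W hf (pat l)) (hsym_shannon collect repair)
  (hsym_empty W hf).
rewrite (hsym_file hf collect); have := hsym_node hf storage; have := hsym_helper bandwidth.
lra.
Qed.
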